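(* Let $S=(d,N_1,\dots,N_L)$ be a neural network architecture, set $N_0=d$, let $\Omega\subset\mathbb{R}^d$, and let $\varrho:\mathbb{R}\to\mathbb{R}$ be locally Lipschitz continuous. Then $\mathcal{RNN}_\varrho^\Omega(S)$ contains at most $\sum_{\ell=1}^L(N_{\ell-1}+1)N_\ell$ linearly independent centers.
   Context: A neural network with architecture $S=(N_0,\dots,N_L)$ is a family $\Phi=((A_\ell,b_\ell))_{\ell=1}^L$, $A_\ell\in\mathbb{R}^{N_\ell\times N_{\ell-1}}$, $b_\ell\in\mathbb{R}^{N_\ell}$; $\mathcal{NN}(S)$ is the set of these. $\mathrm{R}_\varrho^\Omega(\Phi):\Omega\to\mathbb{R}^{N_L}$, $x\mapsto x_L$, where $x_0=x$, $x_\ell=\varrho(A_\ell x_{\ell-1}+b_\ell)$ for $1\le\ell\le L-1$ (componentwise), $x_L=A_Lx_{L-1}+b_L$; $\mathcal{RNN}_\varrho^\Omega(S)=\{\mathrm{R}_\varrho^\Omega(\Phi):\Phi\in\mathcal{NN}(S)\}$. An element $f$ of a subset $A$ of a vector space is a center of $A$ if $\lambda f+(1-\lambda)g\in A$ for all $g\in A$ and all $\lambda\in[0,1]$. *)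

From HB Require Import structures.
From mathcomp Require Import all_boot all_order all_algebra.
From mathcomp Require Import reals.
Set Implicit Arguments. Unset Strict Implicit. Unset Printing Implicit Defensive.
Import Order.TTheory GRing.Theory Num.Theory.
Local Open Scope ring_scope.

Section NN.
Variable R : realType.

Definition locally_lipschitz (rho : R -> R) : Prop :=
  forall x : R, exists2 delta : R, 0 < delta &
    exists C : R, forall y z : R, `|y - x| < delta -> `|z - x| < delta ->
      `|rho y - rho z| <= C * `|y - z|.

(* Widths N 0, N 1, ...; layer l+1 (l = 0, 1, ...) has weight matrix
   A_{l+1} : 'M_(N (l+1), N l) and bias b_{l+1} : 'cV_(N (l+1)).
   A network with L layers only uses the layers 1..L of this family. *)
Definition network (N : nat -> nat) :=
  forall l : nat, 'M[R]_(N l.+1, N l) * 'cV[R]_(N l.+1).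

Fixpoint hidden (N : nat -> nat) (rho : R -> R) (Phi : network N)
    (x : 'cV[R]_(N 0%N)) (l : nat) : 'cV[R]_(N l) :=
  match l return 'cV[R]_(N l) with
  | 0 => x
  | l'.+1 => map_mx rho ((Phi l').1 *m hidden rho Phi x l' + (Phi l').2)
  end.

(* Realization of a network with L = K+1 layers on Omega:
   x_L = A_L x_{L-1} + b_L (no activation in the last layer). *)
Definition realization (N : nat -> nat) (K : nat) (rho : R -> R)
    (Omega : 'cV[R]_(N 0%N) -> Prop) (Phi : network N) :
    {x | Omega x} -> 'cV[R]_(N K.+1) :=
  fun x => (Phi K).1 *m hidden rho Phi (sval x) K + (Phi K).2.

Definition RNN (N : nat -> nat) (K : nat) (rho : R -> R)
    (Omega : 'cV[R]_(N 0%N) -> Prop) : ({x | Omega x} -> 'cV[R]_(N K.+1)) -> Prop :=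
  fun f => exists Phi : network N, @realization N K rho Omega Phi = f.

Definition is_center (T : Type) (n : nat) (A : (T -> 'cV[R]_n) -> Prop)
    (f : T -> 'cV[R]_n) : Prop :=
  A f /\ forall g, A g -> forall lam : R, 0 <= lam <= 1 ->
    A (fun x => lam *: f x + (1 - lam) *: g x).

Definition lin_indep (T : Type) (n k : nat) (f : 'I_k -> T -> 'cV[R]_n) : Prop :=
  forall c : 'I_k -> R,
    (fun x => \sum_(i < k) c i *: f i x) = (fun _ => 0) -> forall i, c i = 0.

End NN.

From HB Require Import structures.
From mathcomp Require Import all_boot all_order all_algebra.
From mathcomp Require Import reals zify ring lra.
From mathcomp Require Import boolp classical_sets topology normedtype sequences.
Import Order.TTheory GRing.Theory Num.Theory numFieldNormedType.Exports.
Local Open Scope ring_scope.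
Set Implicit Arguments. Unset Strict Implicit. Unset Printing Implicit Defensive.

(* Linearly independent centers f_1, ..., f_k of RNN span, together with the
   zero network, the whole simplex { sum c_i f_i | c_i >= 0, sum c_i <= 1 }
   inside RNN.  Evaluating the f_i at k suitable samples gives an invertible
   matrix M, so the coefficients of a realization lying in the simplex are
   recovered as G(Phi) = M^-1 (realization of Phi at the samples).  Since rho is
   locally Lipschitz, G is a locally Lipschitz function of the P parameters of
   Phi, and its image contains a ball of R^k.  This forces k <= P: by Baire the
   values of G at parameters where G is uniformly controlled are dense in some
   ball, and a grid of m^k well separated points of that ball would have to be
   approximated from pairwise distinct cells among (2q+1)^P cells of parameter
   space, which fails for m large when k > P. *)

Section CoordinateLipschitz.
Variables (R : realType) (T : Type) (I : finType) (coord : T -> I -> R).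

Definition coord_close (x y : T) (e : R) := forall i, `|coord x i - coord y i| <= e.

Definition lipschitz_near (h : T -> R) (x0 : T) (eps L : R) :=
  forall x y e, 0 <= e -> coord_close x x0 eps -> coord_close y x0 eps ->
    coord_close x y e -> `|h x - h y| <= L * e.

Definition coord_locally_lipschitz (h : T -> R) :=
  forall x0, exists2 eps, 0 < eps & exists L, lipschitz_near h x0 eps L.

Lemma coord_close_refl x e : 0 <= e -> coord_close x x e.
Proof. by move=> e0 i; rewrite subrr normr0. Qed.

Lemma coord_closeC x y e : coord_close x y e -> coord_close y x e.
Proof. by move=> xy i; rewrite distrC. Qed.

Lemma coord_close_le x y e e' : e <= e' -> coord_close x y e -> coord_close x y e'.
Proof. by move=> ee' xy i; apply: le_trans ee'. Qed.

Lemma lipschitz_nearW h x0 eps eps' L L' : eps' <= eps -> L <= L' ->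
  lipschitz_near h x0 eps L -> lipschitz_near h x0 eps' L'.
Proof.
move=> eps'eps LL' hL x y e e0 x0x y0y xy.
apply: le_trans (hL x y e e0 (coord_close_le eps'eps x0x) (coord_close_le eps'eps y0y) xy) _.
exact: ler_wpM2r.
Qed.

Lemma lipschitz_near_bound h x0 eps L x : 0 <= eps -> lipschitz_near h x0 eps L ->
  coord_close x x0 eps -> `|h x| <= `|h x0| + L * eps.
Proof.
move=> eps0 hL x0x; rewrite -[h x](subrK (h x0)) addrC.
apply: le_trans (ler_normD _ _) _; rewrite lerD2l.
exact: (hL x x0 eps eps0 x0x (coord_close_refl _ eps0) x0x).
Qed.

Lemma coord_locally_lipschitz_coord i : coord_locally_lipschitz (coord^~ i).
Proof. by move=> x0; exists 1 => //; exists 1 => x y e _ _ _ /(_ i); rewrite mul1r. Qed.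

Lemma coord_locally_lipschitz_cst a : coord_locally_lipschitz (fun=> a).
Proof. by move=> x0; exists 1 => //; exists 0 => x y e; rewrite subrr normr0 mul0r. Qed.

Lemma coord_locally_lipschitz_uniform (A : finType) (h : A -> T -> R) :
  (forall a, coord_locally_lipschitz (h a)) ->
  forall x0, exists2 eps, 0 < eps & exists L, forall a, lipschitz_near (h a) x0 eps L.
Proof.
move=> liph x0.
suff [eps eps0 [L hL]] : exists2 eps, 0 < eps &
    exists L, forall a, a \in enum A -> lipschitz_near (h a) x0 eps L.
  by exists eps => //; exists L => a; apply: hL; rewrite mem_enum.
elim: (enum A) => [|a s [eps1 eps10 [L1 hL1]]].
  by exists 1 => //; exists 0.
have [eps2 eps20 [L2 hL2]] := liph a x0.
exists (Num.min eps1 eps2); first by rewrite lt_min eps10 eps20.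
exists (Num.max L1 L2) => b; rewrite in_cons => /predU1P[->|bs].
  by apply: lipschitz_nearW hL2; rewrite ?ge_min ?le_max ?lexx ?orbT.
by apply: lipschitz_nearW (hL1 _ bs); rewrite ?ge_min ?le_max ?lexx ?orbT.
Qed.

Lemma coord_locally_lipschitz_pair h1 h2 x0 :
  coord_locally_lipschitz h1 -> coord_locally_lipschitz h2 ->
  exists2 eps, 0 < eps & exists L, lipschitz_near h1 x0 eps L /\ lipschitz_near h2 x0 eps L.
Proof.
move=> lip1 lip2.
have lip12 : forall b : bool, coord_locally_lipschitz (if b then h1 else h2) by case.
have [eps eps0 [L hL]] := coord_locally_lipschitz_uniform lip12 x0.
by exists eps => //; exists L; split; [apply: (hL true) | apply: (hL false)].
Qed.

Lemma coord_locally_lipschitzD h1 h2 :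
  coord_locally_lipschitz h1 -> coord_locally_lipschitz h2 ->
  coord_locally_lipschitz (fun x => h1 x + h2 x).
Proof.
move=> lip1 lip2 x0; have [eps eps0 [L [hL1 hL2]]] := coord_locally_lipschitz_pair x0 lip1 lip2.
exists eps => //; exists (L + L) => x y e e0 x0x y0y xy.
rewrite opprD addrACA mulrDl; apply: le_trans (ler_normD _ _) _.
by apply: lerD; [apply: hL1 | apply: hL2].
Qed.

Lemma coord_locally_lipschitzM h1 h2 :
  coord_locally_lipschitz h1 -> coord_locally_lipschitz h2 ->
  coord_locally_lipschitz (fun x => h1 x * h2 x).
Proof.
move=> lip1 lip2 x0; have [eps eps0 [L [hL1 hL2]]] := coord_locally_lipschitz_pair x0 lip1 lip2.
exists eps => //; exists ((`|h1 x0| + L * eps) * L + (`|h2 x0| + L * eps) * L).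
move=> x y e e0 x0x y0y xy.
have -> : h1 x * h2 x - h1 y * h2 y = h1 x * (h2 x - h2 y) + h2 y * (h1 x - h1 y) by ring.
rewrite mulrDl -!mulrA; apply: le_trans (ler_normD _ _) _.
rewrite !normrM; apply: lerD; apply: ler_pM => //;
  by [apply: lipschitz_near_bound (ltW eps0) _ _ | apply: hL1 | apply: hL2].
Qed.

Lemma coord_locally_lipschitz_sum (J : Type) (r : seq J) (F : J -> T -> R) :
  (forall j, coord_locally_lipschitz (F j)) ->
  coord_locally_lipschitz (fun x => \sum_(j <- r) F j x).
Proof.
move=> lipF; elim: r => [|j r IHr].
  by under eq_fun do rewrite big_nil; exact: coord_locally_lipschitz_cst.
by under eq_fun do rewrite big_cons; exact: coord_locally_lipschitzD.
Qed.

Lemma coord_locally_lipschitz_comp (rho : R -> R) h :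
  locally_lipschitz rho -> coord_locally_lipschitz h ->
  coord_locally_lipschitz (fun x => rho (h x)).
Proof.
move=> lip_rho liph x0.
have [d d0 [C hC]] := lip_rho (h x0).
have [eps eps0 [L hL]] := liph x0.
set eps' := Num.min eps (d / (2 * (`|L| + 1))).
have eps'0 : 0 < eps' by rewrite lt_min eps0 divr_gt0 // mulr_gt0 // ltr_wpDl.
have {}hL : lipschitz_near h x0 eps' `|L|.
  by apply: lipschitz_nearW hL; rewrite ?ge_min ?lexx ?ler_norm.
have near_hx0 x : coord_close x x0 eps' -> `|h x - h x0| < d.
  move=> x0x; apply: le_lt_trans (hL _ _ _ (ltW eps'0) x0x (coord_close_refl _ (ltW eps'0)) x0x) _.
  apply: (@le_lt_trans _ _ ((`|L| + 1) * (d / (2 * (`|L| + 1))))).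
    by apply: ler_pM; rewrite ?ge_min ?lexx ?orbT ?lerDl // ltW.
  have -> : (`|L| + 1) * (d / (2 * (`|L| + 1))) = d / 2.
    by field; rewrite gt_eqF // ltr_wpDl.
  lra.
exists eps' => //; exists (`|C| * `|L|) => x y e e0 x0x y0y xy.
apply: le_trans (hC _ _ (near_hx0 _ x0x) (near_hx0 _ y0y)) _.
rewrite -mulrA; apply: le_trans (ler_wpM2r (normr_ge0 _) (ler_norm C)) _.
by apply: ler_wpM2l => //; apply: hL.
Qed.

End CoordinateLipschitz.

Lemma ler1_norm_natrB (R : realDomainType) (u v : nat) :
  u != v -> 1 <= `|u%:R - v%:R : R|.
Proof.
rewrite neq_ltn => /orP[] lt; [rewrite distrC|];
  by rewrite ger0_norm ?subr_ge0 ?ler_nat ?(ltnW lt) // lerBrDr addrC natr1 ler_nat.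
Qed.

Lemma quantize (R : realType) (M : R) (q : nat) y : 0 < M -> (0 < q)%N -> `|y| <= M ->
  exists c : 'I_(q.*2.+1), `|y - (c%:R * (M / q%:R) - M)| <= M / q%:R.
Proof.
move=> M0 q0 yM.
have q0' : 0 < q%:R :> R by rewrite ltr0n.
set h := M / q%:R.
have h0 : 0 < h by rewrite divr_gt0.
have /andP[yMl yMr] : - M <= y <= M by rewrite -ler_norml.
set t := (y + M) / h.
have t0 : 0 <= t by rewrite divr_ge0 ?subr_ge0 -?lerBlDr ?sub0r // ltW.
have /andP[t1 t2] := truncn_itv t0.
have c_lt : (Num.truncn t < q.*2.+1)%N.
  rewrite ltnS -(ler_nat R); apply: le_trans t1 _.
  rewrite /t ler_pdivrMr // -muln2 natrM /h.
  have -> : q%:R * 2%:R * (M / q%:R) = 2 * M :> R by field; rewrite gt_eqF.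
  lra.
exists (Ordinal c_lt) => /=.
have e1 : (Num.truncn t)%:R * h <= y + M by rewrite -ler_pdivlMr.
have e2 : y + M < (Num.truncn t).+1%:R * h by rewrite -ltr_pdivrMr.
move: e2; rewrite -natr1 mulrDl mul1r => e2.
rewrite ler_norml; apply/andP; split; lra.
Qed.

Lemma cells_lt_grid_points (a P k : nat) : (0 < a)%N -> (P < k)%N ->
  (((a * ((5 * a) ^ P).+2).*2.+1) ^ P < ((5 * a) ^ P).+1 ^ k)%N.
Proof.
move=> a0 Pk; set m := ((5 * a) ^ P).+1.
have cell_le : ((a * m.+1).*2.+1 <= 5 * a * m)%N.
  have : (a <= a * m)%N by rewrite leq_pmulr.
  rewrite -muln2 mulnS; lia.
apply: (@leq_ltn_trans ((5 * a * m) ^ P)).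
  by have [->|P0] := posnP P; rewrite ?expn0 ?leq_exp2r.
apply: (@leq_trans (m ^ P.+1)); last exact: leq_pexp2l.
by rewrite expnMn expnS ltn_pmul2r ?expn_gt0.
Qed.

(* Matrices carry both a complete uniform and a normed-module structure, but
   their join, needed by Baire's theorem, is only formed by this declaration. *)
HB.instance Definition _ (R : realType) m n :=
  Uniform_isComplete.Build 'M[R]_(m, n) (@mx_complete _ m n).

Lemma Baire_cover_ball (R : realType) (U : completeNormedModType R) (S : nat -> set U)
    (c : U) (r : R) : 0 < r -> (ball c r `<=` \bigcup_j S j)%classic ->
  exists j w, exists2 r', 0 < r' & (ball w r' `<=` closure (S j))%classic.
Proof.
move=> r0 cover; apply: contrapT => no_ball.
have dense_compl j : open (~` closure (S j))%classic /\ dense (~` closure (S j))%classic.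
  split; first exact/closed_openC/closed_closure.
  apply: contrapT => /denseNE[O [[w /open_nbhs_nbhs/nbhs_ballP[r' r'0 wO]] OS]].
  apply: no_ball; exists j, w, r' => // z /wO Oz; apply: contrapT => zS.
  by have : (O `&` ~` closure (S j))%classic z by []; rewrite OS.
have c_in : (ball c r !=set0)%classic by exists c; exact: ballxx.
have [z [/cover [j _ Sz] zS]] := Baire dense_compl c_in (ball_open c r).
by apply: (zS j Logic.I); apply: subset_closure.
Qed.

Section LipschitzImage.
Variables (R : realType) (T : Type) (I : finType) (coord : T -> I -> R).
Variables (n : nat) (g : T -> 'cV[R]_n).
Local Open Scope classical_set_scope.

Definition controlled (J : R) (x : T) :=
  (forall i, `|coord x i| <= J) /\
  forall y e, 0 <= e -> e <= J^-1 -> coord_close coord x y e ->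
    forall a, `|g x a 0 - g y a 0| <= J * e.

Lemma controlled_exists x :
  (forall a, coord_locally_lipschitz coord (fun y => g y a 0)) ->
  exists j : nat, controlled j.+1%:R x.
Proof.
move=> g_lip.
have [eps eps0 [L hL]] := coord_locally_lipschitz_uniform g_lip x.
set X := \sum_i `|coord x i| + `|L| + eps^-1.
have coord_le i : `|coord x i| <= \sum_i `|coord x i|.
  by rewrite (bigD1 i) //= lerDl sumr_ge0.
have X_ge0 : 0 <= \sum_i `|coord x i| by apply: sumr_ge0.
have epsV0 : 0 < eps^-1 by rewrite invr_gt0.
have XJ := truncnS_gt X; have L_ge0 := normr_ge0 L.
exists (Num.truncn X); rewrite /X in XJ *.
split => [i|y e e0 eJ xy a]; first by have := coord_le i; lra.
have e_eps : e <= eps.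
  by apply: le_trans eJ _; rewrite invf_ple ?posrE ?ltr0n //; lra.
apply: le_trans (hL a x y e e0 (coord_close_refl _ _ (ltW eps0))
  (coord_closeC (coord_close_le e_eps xy)) xy) _.
by apply: ler_wpM2r => //; have := ler_norm L; lra.
Qed.

Lemma controlled_grid_card J (m q : nat) (w : 'cV[R]_n) (dl : R) :
  0 < J -> (0 < q)%N -> 0 < dl -> 2 * J * J <= q%:R -> 4 * J * J < q%:R * dl ->
  (forall u : {ffun 'I_n -> 'I_m}, exists x, controlled J x /\
     forall a, `|w a 0 + dl * (u a)%:R - g x a 0| < dl / 4) ->
  (m ^ n <= (q.*2.+1) ^ #|I|)%N.
Proof.
move=> J0 q0 dl0 qJ qdlJ /choice[x hx].
have q_gt0 : 0 < q%:R :> R by rewrite ltr0n.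
set h := J / q%:R.
have cells u : exists cu : I -> 'I_(q.*2.+1),
    forall i, `|coord (x u) i - ((cu i)%:R * h - J)| <= h.
  by have [cu ?] := choice (fun i => quantize J0 q0 ((hx u).1.1 i)); exists cu.
have [c hc] := choice cells.
have h0 : 0 <= h + h by rewrite addr_ge0 // divr_ge0 // ltW.
have hJ : h + h <= J^-1.
  have -> : h + h = 2 * J * J / q%:R * J^-1 by rewrite /h; field; rewrite !gt_eqF.
  by apply: ler_piMl; rewrite ?invr_ge0 ?(ltW J0) // ler_pdivrMr // mul1r.
have Jh : J * (h + h) < dl / 2.
  have -> : J * (h + h) = 2 * J * J / q%:R by rewrite /h; field; rewrite gt_eqF.
  by rewrite ltr_pdivrMr // mulrAC [dl * _]mulrC; lra.
(* Two grid points whose parameters share a cell have images closer than dl / 2,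
   while distinct grid points are at least dl apart. *)
pose F u := [ffun i => c u i].
suff /leq_card : injective F by rewrite !card_ffun !card_ord.
move=> u v /ffunP Fuv.
have xuv : coord_close coord (x u) (x v) (h + h).
  move=> i; have := Fuv i; rewrite !ffunE => cuv.
  apply: le_trans (ler_distD ((c u i)%:R * h - J) _ _) _.
  by rewrite lerD // distrC cuv.
apply/ffunP => a; apply/val_inj/eqP; apply: contraT => uv_a.
have gx := (hx u).1.2 _ _ h0 hJ xuv a.
set gu := g (x u) a 0; set gv := g (x v) a 0.
have d_ge : dl <= `|dl * (u a)%:R - dl * (v a)%:R|.
  by rewrite -mulrBr normrM gtr0_norm // ler_peMr ?ler1_norm_natrB // ltW.
have d_lt : `|dl * (u a)%:R - dl * (v a)%:R| < dl.
  have -> : dl * (u a)%:R - dl * (v a)%:R =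
      (w a 0 + dl * (u a)%:R - gu) - (w a 0 + dl * (v a)%:R - gv) + (gu - gv) by ring.
  apply: le_lt_trans (ler_normD _ _) _.
  apply: le_lt_trans (lerD (ler_normB _ _) (lexx _)) _.
  by have := (hx u).2 a; have := (hx v).2 a; lra.
by have := lt_le_trans d_lt d_ge; rewrite ltxx.
Qed.

Lemma closure_image_approx (A : set T) (z : 'cV[R]_n) (dl : R) :
  closure (g @` A) z -> 0 < dl -> exists x, A x /\ forall a, `|z a 0 - g x a 0| < dl.
Proof.
move=> /(_ (ball z dl)) zA dl0.
have [_ [[x Ax <-] [_ zx]]] := zA (nbhsx_ballx z dl dl0).
by exists x; split => // a; apply: zx.
Qed.

Lemma coord_locally_lipschitz_image_dim (c : 'cV[R]_n) (r : R) :
  (forall a, coord_locally_lipschitz coord (fun x => g x a 0)) ->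
  0 < r -> ball c r `<=` range g -> (n <= #|I|)%N.
Proof.
move=> g_lip r0 c_ball.
have cover : ball c r `<=` \bigcup_j (g @` controlled j.+1%:R).
  move=> _ /c_ball[x _ <-]; have [j xj] := controlled_exists x g_lip.
  by exists j => //; exists x.
have [j [w [r' r'0 w_sub]]] := Baire_cover_ball r0 cover.
rewrite leqNgt; apply/negP => nI.
set J : R := j.+1%:R; have J0 : 0 < J by rewrite ltr0n.
set X := 2 * J * J + 4 * J * J / r'.
have X0 : 0 <= 4 * J * J / r' by rewrite divr_ge0 ?mulr_ge0 // ltW.
set a := (Num.truncn X).+1; have Xa : X < a%:R := truncnS_gt X.
set m := ((5 * a) ^ #|I|).+1; set q := (a * m.+1)%N.
have m_gt0 : 0 < m.+1%:R :> R by rewrite ltr0n.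
have qE : q%:R = a%:R * m.+1%:R :> R by rewrite natrM.
have a_le_q : a%:R <= q%:R :> R by rewrite qE ler_peMr ?ler1n // ltW.
set dl := r' / m.+1%:R.
have dl0 : 0 < dl by rewrite divr_gt0.
suff : (m ^ n <= q.*2.+1 ^ #|I|)%N by rewrite leqNgt cells_lt_grid_points.
apply: (controlled_grid_card (w := w) (dl := dl) J0) => //.
- by rewrite /X in Xa; lra.
- have -> : q%:R * dl = a%:R * r' by rewrite qE /dl; field; rewrite gt_eqF.
  have JJ0 : 0 <= 2 * J * J by rewrite !mulr_ge0 // ltW.
  have : 4 * J * J / r' < a%:R by rewrite /X in Xa; lra.
  by rewrite ltr_pdivrMr.
move=> u; set z := w + dl *: \col_b (u b)%:R : 'cV[R]_n.
have wz : ball w r' z.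
  split => // b b'; rewrite [b']ord1 !mxE /ball /= opprD addNKr normrN.
  rewrite ger0_norm; last by rewrite mulr_ge0 ?(ltW dl0).
  apply: (@lt_le_trans _ _ (dl * m.+1%:R)); first by rewrite ltr_pM2l // ltr_nat ltnS ltnW.
  by rewrite /dl divfK ?gt_eqF.
have dl4 : 0 < dl / 4 by rewrite divr_gt0.
have [x [xJ zx]] := closure_image_approx (w_sub _ wz) dl4.
by exists x; split => // b; have := zx b; rewrite !mxE.
Qed.

End LipschitzImage.

Section Centers.
Variables (R : realType) (T : Type) (n : nat) (A : (T -> 'cV[R]_n) -> Prop).

Lemma centers_subconvex k (f : 'I_k -> T -> 'cV[R]_n) :
  A (fun=> 0) -> (forall i, is_center A (f i)) ->
  forall c : 'I_k -> R, (forall i, 0 <= c i) -> \sum_i c i <= 1 ->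
  A (fun x => \sum_i c i *: f i x).
Proof.
move=> A0; elim: k f => [|k IHk] f f_center c c_ge0 c_le1.
  by under eq_fun do rewrite big_ord0.
under eq_fun do rewrite big_ord_recl.
move: c_le1; rewrite big_ord_recl; set c0 := c ord0; set rest := \sum_(i < k) _ => c_le1.
have rest_ge0 : 0 <= rest by apply: sumr_ge0.
have c0_ge0 : 0 <= c0 := c_ge0 ord0.
pose c' i := c (lift ord0 i) / (1 - c0).
have c'_ge0 i : 0 <= c' i by rewrite divr_ge0 // subr_ge0; lra.
have c'_le1 : \sum_i c' i <= 1.
  rewrite -mulr_suml -/rest; have [c0_1|c0_neq1] := eqVneq c0 1.
    by rewrite c0_1 subrr invr0 mulr0.
  have c0_lt1 : 0 < 1 - c0 by rewrite subr_gt0 lt_neqAle c0_neq1 /=; lra.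
  by rewrite ler_pdivrMr // mul1r; lra.
have c'_scale i : (1 - c0) * c' i = c (lift ord0 i).
  have [c0_1|c0_neq1] := eqVneq c0 1; last by rewrite mulrC divfK // subr_eq0 eq_sym.
  have rest0 : rest = 0 by lra.
  by rewrite /c' c0_1 subrr mul0r (psumr_eq0P (fun i _ => c_ge0 _) rest0).
have c0_le1 : 0 <= c0 <= 1 by rewrite c0_ge0 /=; lra.
have := (f_center ord0).2 _ (IHk _ (fun i => f_center (lift ord0 i)) c' c'_ge0 c'_le1) c0 c0_le1.
congr A; apply: funext => x; congr (_ + _).
by rewrite scaler_sumr; apply: eq_bigr => i _; rewrite scalerA c'_scale.
Qed.

End Centers.

Section EvaluationMatrix.
Variables (R : realType) (T : Type) (n k : nat) (f : 'I_k -> T -> 'cV[R]_n).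

Definition eval_mx m (s : 'I_m -> T * 'I_n) : 'M[R]_(m, k) :=
  \matrix_(a, i) f i (s a).1 (s a).2 0.

Lemma eval_mx_comb m (s : 'I_m -> T * 'I_n) (c : 'I_k -> R) :
  \col_a (\sum_i c i *: f i (s a).1) (s a).2 0 = eval_mx s *m \col_i c i.
Proof.
apply/matrixP => a j; rewrite [j]ord1 !mxE summxE.
by apply: eq_bigr => i _; rewrite !mxE mulrC.
Qed.

Hypothesis f_indep : lin_indep f.

Lemma lin_indep_eval_nz (c : 'rV[R]_k) : c != 0 ->
  exists x r, (\sum_i c 0 i *: f i x) r 0 != 0.
Proof.
move=> c_nz; apply: contrapT => all0; move/negP: c_nz; apply.
apply/eqP/rowP => i; rewrite mxE; apply: (@f_indep (fun i => c 0 i)).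
apply: funext => x; apply/matrixP => r j; rewrite [j]ord1 mxE.
by apply: contrapT => /eqP xr; apply: all0; exists x, r.
Qed.

Lemma lin_indep_eval_mx_rank m : (m <= k)%N ->
  exists s : 'I_m -> T * 'I_n, \rank (eval_mx s) = m.
Proof.
elim: m => [|m IHm] mk.
  have s0 : 'I_0 -> T * 'I_n by case=> a; rewrite ltn0.
  by exists s0; rewrite flatmx0 mxrank0.
have [s s_rank] := IHm (ltnW mk); set B := eval_mx s.
have ker_nz : kermx B^T != 0.
  by rewrite -mxrank_eq0 mxrank_ker mxrank_tr s_rank subn_eq0 -ltnNge.
have [c /sub_kermxP cB c_nz] := rowV0Pn ker_nz.
have [x [r xr]] := lin_indep_eval_nz c_nz.
set v := \row_i f i x r 0.
have v_notin : ~~ (v <= B)%MS.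
  apply/negP => /submxP[u vu]; move/negP: xr; apply.
  have -> : (\sum_i c 0 i *: f i x) r 0 = (v *m c^T) 0 0.
    by rewrite [RHS]mxE summxE; apply: eq_bigr => i _; rewrite !mxE mulrC.
  by rewrite vu -mulmxA -[B]trmxK -trmx_mul cB trmx0 mulmx0 mxE.
pose s' (a : 'I_(1 + m)) := if split a is inr a' then s a' else (x, r).
exists s'; have -> : eval_mx s' = col_mx v B.
  by apply/matrixP => a i; rewrite !mxE /s'; case: (split a) => b; rewrite !mxE.
have : (\rank B < \rank (col_mx v B))%N.
  by apply: rank_ltmx; rewrite ltmxE col_mx_sub -addsmxE addsmxSr /= negb_and v_notin.
by rewrite s_rank => rank_gt; apply/eqP; rewrite eqn_leq rank_leq_row.
Qed.

Lemma lin_indep_eval_unitmx : exists s : 'I_k -> T * 'I_n, eval_mx s \in unitmx.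
Proof.
have [s s_rank] := lin_indep_eval_mx_rank (leqnn k).
by exists s; rewrite -row_free_unit /row_free s_rank.
Qed.

End EvaluationMatrix.

Section NetworkParameters.
Variables (R : realType) (N : nat -> nat) (K : nat).

Definition net_index := {l : 'I_K.+1 & ('I_(N l.+1) * 'I_(N l) + 'I_(N l.+1))%type}.

Definition net_coord (Phi : network R N) (t : net_index) : R :=
  match t with
  | existT l (inl ij) => (Phi l).1 ij.1 ij.2
  | existT l (inr i) => (Phi l).2 i 0
  end.

Lemma card_net_index : #|{: net_index}| = (\sum_(l < K.+1) (N l + 1) * N l.+1)%N.
Proof.
rewrite card_tagged sumnE big_map big_enum /=.
by apply: eq_bigr => l _; rewrite card_sum card_prod !card_ord mulnDl mul1n mulnC.
Qed.

Variable rho : R -> R.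
Hypothesis rho_lip : locally_lipschitz rho.

Lemma affine_layer_locally_lipschitz l (h : network R N -> 'cV[R]_(N l)) i :
  (l < K.+1)%N -> (forall j, coord_locally_lipschitz net_coord (fun Phi => h Phi j 0)) ->
  coord_locally_lipschitz net_coord (fun Phi => ((Phi l).1 *m h Phi + (Phi l).2) i 0).
Proof.
move=> lK h_lip.
have -> : (fun Phi : network R N => ((Phi l).1 *m h Phi + (Phi l).2) i 0) =
    (fun Phi => \sum_j (Phi l).1 i j * h Phi j 0 + (Phi l).2 i 0).
  by apply: funext => Phi; rewrite !mxE.
apply: coord_locally_lipschitzD.
  apply: coord_locally_lipschitz_sum => j; apply: coord_locally_lipschitzM => //.
  exact: (coord_locally_lipschitz_coord _ (existT _ (Ordinal lK) (inl (i, j)))).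
exact: (coord_locally_lipschitz_coord _ (existT _ (Ordinal lK) (inr i))).
Qed.

Lemma hidden_locally_lipschitz x l i : (l <= K)%N ->
  coord_locally_lipschitz net_coord (fun Phi => hidden rho Phi x l i 0).
Proof.
elim: l i => [|l IHl] i lK; first exact: coord_locally_lipschitz_cst.
have -> : (fun Phi => hidden rho Phi x l.+1 i 0) =
    (fun Phi => rho (((Phi l).1 *m hidden rho Phi x l + (Phi l).2) i 0)).
  by apply: funext => Phi; rewrite /= mxE.
apply: coord_locally_lipschitz_comp rho_lip _.
apply: affine_layer_locally_lipschitz => [|j]; first exact: leqW.
exact: IHl (ltnW lK).
Qed.

Lemma realization_locally_lipschitz (Omega : 'cV[R]_(N 0%N) -> Prop) x r :
  coord_locally_lipschitz net_coord (fun Phi => @realization R N K rho Omega Phi x r 0).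
Proof.
by apply: affine_layer_locally_lipschitz => // j; apply: hidden_locally_lipschitz.
Qed.

End NetworkParameters.

Lemma RNN0 (R : realType) (N : nat -> nat) (K : nat) (rho : R -> R)
    (Omega : 'cV[R]_(N 0%N) -> Prop) :
  @RNN R N K rho Omega (fun=> 0).
Proof. by exists (fun=> (0, 0)); apply: funext => x; rewrite /realization mul0mx addr0. Qed.

Lemma ball_in_simplex (R : realType) k (c : 'cV[R]_k) : (0 < k)%N ->
  ball (const_mx (2 * k%:R)^-1 : 'cV[R]_k) (2 * k%:R)^-1 c ->
  (forall i, 0 <= c i 0) /\ \sum_i c i 0 <= 1.
Proof.
move=> k_gt0 [_ c_near]; set e := (2 * k%:R)^-1 in c_near *.
have k0 : 0 < k%:R :> R by rewrite ltr0n.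
have c_bounds i : 0 <= c i 0 <= 2 * e.
  by have := c_near i 0; rewrite /ball /= mxE ltr_norml => /andP[]; rewrite !ltrBlDr => *; lra.
split=> [i|]; first by have /andP[] := c_bounds i.
apply: le_trans (_ : \sum_(i < k) 2 * e <= 1).
  by apply: ler_sum => i _; have /andP[] := c_bounds i.
suff -> : \sum_(i < k) 2 * e = 1 by [].
by rewrite sumr_const card_ord -mulr_natl /e; field; rewrite gt_eqF.
Qed.

Unset Implicit Arguments. Set Strict Implicit. Set Printing Implicit Defensive.

Theorem propositionC4 (R : realType) (N : nat -> nat) (K : nat)
    (Omega : 'cV[R]_(N 0%N) -> Prop) (rho : R -> R)
    (hrho : locally_lipschitz rho)
    (k : nat) (f : 'I_k -> {x | Omega x} -> 'cV[R]_(N K.+1)) :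
  (forall i, is_center (@RNN R N K rho Omega) (f i)) ->
  lin_indep f ->
  (k <= \sum_(l < K.+1) (N l + 1) * N l.+1)%N.
Proof.
move=> f_center f_indep.
have [->|k_gt0] := posnP k; first by [].
have [s s_unit] := lin_indep_eval_unitmx f_indep.
pose G Phi : 'cV[R]_k :=
  invmx (eval_mx f s) *m \col_a @realization R N K rho Omega Phi (s a).1 (s a).2 0.
have G_lip a : coord_locally_lipschitz (@net_coord R N K) (fun Phi => G Phi a 0).
  have -> : (fun Phi => G Phi a 0) = fun Phi => \sum_b invmx (eval_mx f s) a b *
      @realization R N K rho Omega Phi (s b).1 (s b).2 0.
    by apply: funext => Phi; rewrite !mxE; under eq_bigr do rewrite mxE.
  apply: coord_locally_lipschitz_sum => b.
  apply: coord_locally_lipschitzM; first exact: coord_locally_lipschitz_cst.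
  exact: realization_locally_lipschitz.
have G_onto : (ball (const_mx (2 * k%:R)^-1 : 'cV[R]_k) (2 * k%:R)^-1 `<=` range G)%classic.
  move=> c /(ball_in_simplex k_gt0)[c_ge0 c_le1].
  have [Phi Phi_c] := centers_subconvex (RNN0 K rho Omega) f_center c_ge0 c_le1.
  exists Phi => //; rewrite /G Phi_c eval_mx_comb mulKmx //.
  by apply/matrixP => i j; rewrite [j]ord1 mxE.
rewrite -card_net_index; apply: coord_locally_lipschitz_image_dim G_lip _ G_onto.
by rewrite invr_gt0 mulr_gt0 ?ltr0n.
Qed.
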